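(* Let $k\in[-\pi,\pi)$ and let $w\in\ell^2(\mathbb Z;\mathbb C^6)$ satisfy $\hat H_{\mathrm{II}}(k)w=Ew$ for some real constant $E$. Then $$\hat H_{\mathrm{II}}(k)\hat R(k)w=\hat R(k)\hat H_{\mathrm{II}}(k)w=E\,\hat R(k)w,\qquad \hat R(k)\hat R(k)w=w,\qquad \hat H_{\mathrm{II}}(k)\hat Vw=-E\,\hat Vw.$$
   Context: Parameters $b_\pm>0$, $\delta_\pm$ with $b_\pm+\delta_\pm>0$, $c>0$. For $n\in\mathbb Z$ let $b_n=b_+$ ($n\ge0$), $b_n=b_-$ ($n\le-1$); $c_n=b_++\delta_+$ ($n\ge0$), $c_{-1}=c$, $c_n=b_-+\delta_-$ ($n\le-2$); $d_n=b_++\delta_+$ ($n\ge0$), $d_{-1}=d_{-2}=c$, $d_n=b_-+\delta_-$ ($n\le-3$). $\hat H_{\mathrm{II}}(k)$ acts on $w=\{w(n)\}_{n\in\mathbb Z}$, $w(n)=(w_{j,n})_{j=1}^6$, by $(\hat H_{\mathrm{II}}(k)w)_{1,n}=-b_nw_{4,n}-b_nw_{5,n}-c_ne^{-ik}w_{6,n+1}$, $(\hat H_{\mathrm{II}}(k)w)_{2,n}=-b_nw_{4,n}-d_{n-2}e^{ik}w_{5,n-2}-b_nw_{6,n}$, $(\hat H_{\mathrm{II}}(k)w)_{3,n}=-c_nw_{4,n+1}-b_nw_{5,n}-b_nw_{6,n}$, $(\hat H_{\mathrm{II}}(k)w)_{4,n}=-b_nw_{1,n}-b_nw_{2,n}-c_{n-1}w_{3,n-1}$,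 $(\hat H_{\mathrm{II}}(k)w)_{5,n}=-b_nw_{1,n}-d_ne^{-ik}w_{2,n+2}-b_nw_{3,n}$, $(\hat H_{\mathrm{II}}(k)w)_{6,n}=-c_{n-1}e^{ik}w_{1,n-1}-b_nw_{2,n}-b_nw_{3,n}$. Operators: $[\hat R(k)w](n)=e^{ink}\begin{pmatrix}J&0\\0&J\end{pmatrix}\overline{w(n)}$ with $J=\begin{pmatrix}0&0&1\\0&1&0\\1&0&0\end{pmatrix}$, and $(\hat Vw)(n)=\begin{pmatrix}I_3&0\\0&-I_3\end{pmatrix}w(n)$. *)

From Stdlib Require Import Reals ZArith.
From Coquelicot Require Import Coquelicot.
Open Scope R_scope.

Inductive comp6 : Type := c1 | c2 | c3 | c4 | c5 | c6.

(* A sequence w = {w(n)}_{n in Z} of vectors of C^6; w n j = w_{j,n}. *)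
Definition seq6 : Type := Z -> comp6 -> C.

Definition eiC (t : R) : C := (cos t, sin t).

Definition sqnorm6 (v : comp6 -> C) : R :=
  Cmod (v c1) ^ 2 + Cmod (v c2) ^ 2 + Cmod (v c3) ^ 2
  + Cmod (v c4) ^ 2 + Cmod (v c5) ^ 2 + Cmod (v c6) ^ 2.

Definition is_l2 (w : seq6) : Prop :=
  ex_series (fun m : nat => sqnorm6 (w (Z.of_nat m)))
  /\ ex_series (fun m : nat => sqnorm6 (w (- Z.of_nat m - 1)%Z)).

Definition bcoef (bp bm : R) (n : Z) : R := if (0 <=? n)%Z then bp else bm.
Definition ccoef (bp bm dp dm c : R) (n : Z) : R :=
  if (0 <=? n)%Z then bp + dp
  else if (n =? -1)%Z then c else bm + dm.
Definition dcoef (bp bm dp dm c : R) (n : Z) : R :=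
  if (0 <=? n)%Z then bp + dp
  else if ((n =? -1)%Z || (n =? -2)%Z)%bool then c else bm + dm.

Definition H_II (bp bm dp dm c k : R) (w : seq6) : seq6 :=
  fun n j =>
  let b := bcoef bp bm in
  let cc := ccoef bp bm dp dm c in
  let d := dcoef bp bm dp dm c in
  match j with
  | c1 => (- RtoC (b n) * w n c4 - RtoC (b n) * w n c5
           - RtoC (cc n) * eiC (- k) * w (n + 1)%Z c6)%C
  | c2 => (- RtoC (b n) * w n c4 - RtoC (d (n - 2)%Z) * eiC k * w (n - 2)%Z c5
           - RtoC (b n) * w n c6)%C
  | c3 => (- RtoC (cc n) * w (n + 1)%Z c4 - RtoC (b n) * w n c5
           - RtoC (b n) * w n c6)%C
  | c4 => (- RtoC (b n) * w n c1 - RtoC (b n) * w n c2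
           - RtoC (cc (n - 1)%Z) * w (n - 1)%Z c3)%C
  | c5 => (- RtoC (b n) * w n c1 - RtoC (d n) * eiC (- k) * w (n + 2)%Z c2
           - RtoC (b n) * w n c3)%C
  | c6 => (- RtoC (cc (n - 1)%Z) * eiC k * w (n - 1)%Z c1 - RtoC (b n) * w n c2
           - RtoC (b n) * w n c3)%C
  end.

(* [\hat R(k) w](n) = e^{ink} diag(J,J) conj(w(n)),  J = antidiagonal 3x3. *)
Definition R_op (k : R) (w : seq6) : seq6 :=
  fun n j =>
  let e := eiC (IZR n * k) in
  match j with
  | c1 => (e * Cconj (w n c3))%C
  | c2 => (e * Cconj (w n c2))%C
  | c3 => (e * Cconj (w n c1))%C
  | c4 => (e * Cconj (w n c6))%C
  | c5 => (e * Cconj (w n c5))%C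
  | c6 => (e * Cconj (w n c4))%C
  end.

Definition V_op (w : seq6) : seq6 :=
  fun n j =>
  match j with
  | c1 | c2 | c3 => w n j
  | c4 | c5 | c6 => (- w n j)%C
  end.

(* Complex conjugation commutes with the real coefficients of H_II and turns each
   hopping phase e^{±ik} into its inverse; the factor e^{ink} in R(k) restores it,
   since the hopping in a component moves n by as many steps as its phase has
   factors of e^{ik}.  H_II(k) only couples the
   components 1-3 with 4-6, so the chiral operator V anticommutes with it. *)
From Stdlib Require Import Reals ZArith Lra.
From Coquelicot Require Import Coquelicot.
Open Scope R_scope.

Lemma eiC_add a b : eiC (a + b) = (eiC a * eiC b)%C.
Proof. unfold eiC, Cmult; simpl. rewrite cos_plus, sin_plus. f_equal; ring. Qed.

Lemma eiC_neq0 a : eiC a <> 0%C.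
Proof.
  intro Ha. pose proof (sin2_cos2 a) as Hpyth. unfold Rsqr in Hpyth.
  injection Ha as Hcos Hsin. rewrite Hcos, Hsin in Hpyth. lra.
Qed.

Lemma eiC_opp a : eiC (- a) = (/ eiC a)%C.
Proof.
  assert (Hinv : (eiC (- a) * eiC a)%C = 1%C).
  { rewrite <- eiC_add. replace (- a + a) with 0 by ring.
    unfold eiC. now rewrite cos_0, sin_0. }
  rewrite <- (Cmult_1_l (/ eiC a)), <- Hinv. field. apply eiC_neq0.
Qed.

Lemma Cconj_eiC a : Cconj (eiC a) = (/ eiC a)%C.
Proof. rewrite <- eiC_opp. unfold eiC, Cconj; simpl. now rewrite cos_neg, sin_neg. Qed.

Lemma Cconj_RtoC r : Cconj (RtoC r) = RtoC r.
Proof. unfold Cconj, RtoC; simpl. f_equal; ring. Qed.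

Lemma eiC_IZR_add n m k : eiC (IZR (n + m) * k) = (eiC (IZR n * k) * eiC (IZR m * k))%C.
Proof. rewrite <- eiC_add, plus_IZR. f_equal; ring. Qed.

Lemma eiC_IZR_sub n m k : eiC (IZR (n - m) * k) = (eiC (IZR n * k) / eiC (IZR m * k))%C.
Proof. unfold Cdiv. rewrite <- eiC_opp, <- eiC_add, minus_IZR. f_equal; ring. Qed.

Section Symmetries.

Variables (bp bm dp dm c k : R).

Notation H := (H_II bp bm dp dm c k).

Lemma H_II_R_op w n j : H (R_op k w) n j = R_op k (H w) n j.
Proof.
  assert (ek1 : eiC (IZR 1 * k) = eiC k) by (f_equal; ring).
  assert (ek2 : eiC (IZR 2 * k) = (eiC k * eiC k)%C) by (rewrite <- eiC_add; f_equal; ring).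
  pose proof (eiC_neq0 k). pose proof (eiC_neq0 (IZR n * k)).
  destruct j; unfold H_II, R_op; simpl;
    rewrite ?Cminus_conj, ?Cmult_conj, ?Copp_conj, ?Cconj_RtoC, ?Cconj_eiC,
      ?eiC_IZR_add, ?eiC_IZR_sub, ?ek1, ?ek2, ?eiC_opp;
    field; auto.
Qed.

Lemma H_II_V_op w n j : H (V_op w) n j = (- V_op (H w) n j)%C.
Proof. destruct j; unfold H_II, V_op; simpl; ring. Qed.

End Symmetries.

Lemma R_op_involutive k w n j : R_op k (R_op k w) n j = w n j.
Proof.
  assert (Hinv : forall z, (eiC (IZR n * k) * Cconj (eiC (IZR n * k) * Cconj z))%C = z).
  { intro z. rewrite Cmult_conj, Cconj_conj, Cconj_eiC. field. apply eiC_neq0. }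
  destruct j; apply Hinv.
Qed.

Lemma R_op_scale k a v w :
  (forall n j, v n j = (a * w n j)%C) ->
  forall n j, R_op k v n j = (Cconj a * R_op k w n j)%C.
Proof. intros Hvw n j. destruct j; unfold R_op; rewrite !Hvw, Cmult_conj; ring. Qed.

Lemma V_op_scale a v w :
  (forall n j, v n j = (a * w n j)%C) ->
  forall n j, V_op v n j = (a * V_op w n j)%C.
Proof. intros Hvw n j. destruct j; unfold V_op; rewrite Hvw; ring. Qed.

Theorem proposition11 (bp bm dp dm c : R)
  (hbp : 0 < bp) (hbm : 0 < bm) (hdp : 0 < bp + dp) (hdm : 0 < bm + dm) (hc : 0 < c)
  (k : R) (hk : - PI <= k < PI) (w : seq6) (hw : is_l2 w) (E : R)
  (hE : forall n j, H_II bp bm dp dm c k w n j = (RtoC E * w n j)%C) :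
  forall n j,
    H_II bp bm dp dm c k (R_op k w) n j = R_op k (H_II bp bm dp dm c k w) n j
    /\ R_op k (H_II bp bm dp dm c k w) n j = (RtoC E * R_op k w n j)%C
    /\ R_op k (R_op k w) n j = w n j
    /\ H_II bp bm dp dm c k (V_op w) n j = (- RtoC E * V_op w n j)%C.
Proof.
  intros n j. split; [| split; [| split]].
  - apply H_II_R_op.
  - now rewrite (R_op_scale k _ _ _ hE), Cconj_RtoC.
  - apply R_op_involutive.
  - rewrite H_II_V_op, (V_op_scale _ _ _ hE). ring.
Qed.
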